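(* Let $(H,\partial)$ be a left (respectively extended) Cartan–Eilenberg system whose left couple $(A',E^1)$ converges conditionally to its colimit, i.e. $\lim_sH(-\infty,s)=0$ and $\operatorname{Rlim}_sH(-\infty,s)=0$. Then for each $j\in\mathbb{Z}$ (respectively each $j\in\mathbb{Z}\cup\{+\infty\}$) there is a short exact sequence $$0\to\operatorname{Rlim}_iH(i,j)\xrightarrow{\ \partial\ }H(-\infty,j)\xrightarrow{\ \tilde\eta\ }\lim_iH(i,j)\to0,$$ where the limits are over integers $i\le j$ as $i\to-\infty$, $\tilde\eta$ is induced by the maps $\eta\colon H(-\infty,j)\to H(i,j)$, and $\partial$ is a natural map of internal degree $-1$ induced by the maps $\partial\colon H(i,j)\to H(-\infty,i)$.
   Context: Let $\mathcal{A}$ be the category of $\mathbb{Z}$-graded $R$-modules. For a linearly ordered set $\mathcal{I}$, an $\mathcal{I}$-system $(H,\partial)$ consists of objects $H(i,j)$ for $i\le j$ in $\mathcal{I}$, functorial morphisms $\eta\colon H(i,j)\to H(i',j')$ (internal degree $0$) for $i\le i'$, $j\le j'$, and natural morphisms $\partial\colon H(j,k)\to H(i,j)$ (internal degree $-1$) for $i\le j\le k$, with $H(i,j)\xrightarrow{\eta}H(i,k)\xrightarrow{\eta}H(j,k)\xrightarrow{\partial}H(i,j)$ exact at each vertex. Left Cartan–Eilenberg system: $(\mathbb{Z}\cup\{-\infty\})$-system; extended: $(\mathbb{Z}\cup\{\pm\infty\})$-system. Left couple: $A'_s=H(-\infty,s)$, $E^1_s=H(s-1,s)$, $\alpha_s=\eta\colon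 H(-\infty,s-1)\to H(-\infty,s)$, $\beta_s=\eta\colon H(-\infty,s)\to H(s-1,s)$, $\gamma_s=\partial\colon H(s-1,s)\to H(-\infty,s-1)$. An exact couple converges conditionally to the colimit if $\lim_sA_s=0$ and $\operatorname{Rlim}_sA_s=0$, where $\operatorname{Rlim}=\lim^1$ (inverse limits along $\alpha$, and along $\eta\colon H(i-1,j)\to H(i,j)$ for $\lim_i$). *)

From HB Require Import structures.
From mathcomp Require Import all_boot all_order all_algebra.
Set Implicit Arguments. Unset Strict Implicit. Unset Printing Implicit Defensive.
Import Order.TTheory GRing.Theory Num.Theory.
Local Open Scope ring_scope.

(* An I-system over an index type I with order [le] consists of graded modules
   H i j (meaningful for le i j; values for other pairs are never constrained),
   degree-0 maps eta : H(i,j) -> H(i',j') and degree -1 maps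
   del : H(j,k) -> H(i,j), given degreewise as R-linear maps. *)
Record system (R : pzRingType) (I : Type) := System {
  H : I -> I -> int -> lmodType R;
  eta : forall (i j i' j' : I) (n : int), {linear H i j n -> H i' j' n};
  del : forall (i j k : I) (n : int), {linear H j k n -> H i j (n - 1)}
}.

Definition is_system (R : pzRingType) (I : Type) (le : I -> I -> bool)
    (S : system R I) : Prop :=
  (forall i j n (x : H S i j n), le i j -> eta S i j i j n x = x) /\
  (forall i j i' j' i'' j'' n (x : H S i j n),
      le i j -> le i' j' -> le i'' j'' ->
      le i i' -> le i' i'' -> le j j' -> le j' j'' ->
      eta S i' j' i'' j'' n (eta S i j i' j' n x) = eta S i j i'' j'' n x) /\
  (forall i j k i' j' k' n (x : H S j k n),
      le i j -> le j k -> le i' j' -> le j' k' ->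
      le i i' -> le j j' -> le k k' ->
      del S i' j' k' n (eta S j k j' k' n x)
      = eta S i j i' j' (n - 1) (del S i j k n x)) /\
  (* exactness of H(i,j) -> H(i,k) -> H(j,k) -> H(i,j) at each vertex *)
  (forall i j k n, le i j -> le j k ->
     (forall x : H S i k n,
        eta S i k j k n x = 0 <-> exists y : H S i j n, eta S i j i k n y = x) /\
     (forall x : H S j k n,
        del S i j k n x = 0 <-> exists y : H S i k n, eta S i k j k n y = x) /\
     (forall x : H S i j (n - 1),
        eta S i j i k (n - 1) x = 0 <-> exists y : H S j k n, del S i j k n y = x)).

(* Conditional convergence of the left couple: A'_s = H(-oo,s), with
   alpha_s = eta : H(-oo,s-1) -> H(-oo,s); lim_s A_s = 0 and Rlim_s A_s = 0,
   where Rlim = lim^1 = coker of (a_s) |-> (a_s - alpha a_{s-1}) on prod_s A_s. *)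
Definition cond_conv (R : pzRingType) (I : Type) (S : system R I)
    (fin : int -> I) (ninf : I) : Prop :=
  (forall n (a : forall s : int, H S ninf (fin s) n),
      (forall s, eta S ninf (fin (s - 1)) ninf (fin s) n (a (s - 1)) = a s) ->
      forall s, a s = 0) /\
  (forall n (b : forall s : int, H S ninf (fin s) n),
      exists a : forall s : int, H S ninf (fin s) n,
        forall s, a s - eta S ninf (fin (s - 1)) ninf (fin s) n (a (s - 1)) = b s).

(* The conclusion at index j: there is a (degreewise R-linear) map
   delta_n : prod_{i <= j} H(i,j)_n -> H(-oo,j)_{n-1}, the map induced by del
   (characterised below), whose kernel is exactly the image of the
   Rlim-defining map d(x)_i = x_i - eta x_{i-1}; so delta factors as an injection
   Rlim_i H(i,j) -> H(-oo,j) of degree -1; its image is the kernel of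
   eta~ : H(-oo,j) -> lim_i H(i,j); and eta~ is surjective. *)
Definition ses_at (R : pzRingType) (I : Type) (le : I -> I -> bool)
    (S : system R I) (fin : int -> I) (ninf : I) (j : I) : Prop :=
  exists delta : forall n : int, (forall i : int, H S (fin i) j n) -> H S ninf j (n - 1),
    (forall n y y', delta n (fun i => y i + y' i) = delta n y + delta n y') /\
    (forall n (r : R) y, delta n (fun i => r *: y i) = r *: delta n y) /\
    (* delta is induced by del : H(i,j) -> H(-oo,i): if a in prod_i H(-oo,i)
       satisfies a_i - alpha a_{i-1} = del y_i then delta y = eta a_i *)
    (forall n (y : forall i : int, H S (fin i) j n)
            (a : forall i : int, H S ninf (fin i) (n - 1)),
        (forall i, le (fin i) j ->
           a i - eta S ninf (fin (i - 1)) ninf (fin i) (n - 1) (a (i - 1))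
           = del S ninf (fin i) j n (y i)) ->
        forall i, le (fin i) j -> delta n y = eta S ninf (fin i) ninf j (n - 1) (a i)) /\
    (forall n (y : forall i : int, H S (fin i) j n),
        delta n y = 0 <->
        exists x : forall i : int, H S (fin i) j n,
          forall i, le (fin i) j ->
            y i = x i - eta S (fin (i - 1)) j (fin i) j n (x (i - 1))) /\
    (forall n (h : H S ninf j (n - 1)),
        (forall i, le (fin i) j -> eta S ninf j (fin i) j (n - 1) h = 0) <->
        exists y, delta n y = h) /\
    (forall m (x : forall i : int, H S (fin i) j m),
        (forall i, le (fin i) j -> eta S (fin (i - 1)) j (fin i) j m (x (i - 1)) = x i) ->
        exists h : H S ninf j m,
          forall i, le (fin i) j -> eta S ninf j (fin i) j m h = x i).

(* Index set Z u {-oo} (left Cartan-Eilenberg systems). *)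
Inductive lidx := LNInf | LFin of int.
Definition lle (a b : lidx) : bool :=
  match a, b with
  | LNInf, _ => true
  | LFin _, LNInf => false
  | LFin x, LFin y => (x <= y)%R
  end.

(* Index set Z u {-oo, +oo} (extended Cartan-Eilenberg systems). *)
Inductive xidx := XNInf | XFin of int | XPInf.
Definition xle (a b : xidx) : bool :=
  match a, b with
  | XNInf, _ => true
  | _, XPInf => true
  | XFin x, XFin y => (x <= y)%R
  | _, _ => false
  end.

From HB Require Import structures.
From mathcomp Require Import all_boot all_order all_algebra zify.
From Stdlib Require Import ClassicalEpsilon.
Set Implicit Arguments. Unset Strict Implicit.
Import Order.TTheory GRing.Theory Num.Theory.
Local Open Scope ring_scope.


(* The map delta sends y in prod_i H(i,j) to the common image in H(-oo,j) of
   the a_i, where (a_i) solves a_i - alpha a_(i-1) = del y_i in prod_i H(-oo,i):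
   a solution exists because Rlim H(-oo,_) = 0 and is unique because
   lim H(-oo,_) = 0.  Each exactness statement is then a diagram chase through
   the exact triangles H(-oo,i) -> H(-oo,j) -> H(i,j) -> H(-oo,i), using
   lim = 0 to kill compatible families and Rlim = 0 (or, in H(i,j),
   antidifferences over Z) to split them. *)

Lemma subr_eq_swap (V : zmodType) (a b c d : V) : a - b = c - d -> a - c = b - d.
Proof. by move=> e; rewrite -(subrK b a) e addrAC [c - d - c]addrAC subrr add0r addrC. Qed.

Lemma exists_antidifference (V : zmodType) (h : int -> V) :
  exists w : int -> V, forall i, w i - w (i - 1) = h i.
Proof.
pose w (i : int) : V := match i with
  | Posz n => \sum_(k < n) h (k.+1)%:Z
  | Negz n => - \sum_(k < n.+1) h (- (k%:Z)) end.
exists w => -[[|n]|n].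
- have -> : (Posz 0 - 1 = Negz 0) by lia.
  by rewrite /w big_ord0 big_ord1 oppr0 opprK add0r.
- have -> : (Posz n.+1 - 1 = Posz n) by lia.
  by rewrite /w big_ord_recr /= addrAC subrr add0r.
- have -> : (Negz n - 1 = Negz n.+1) by lia.
  rewrite /w (big_ord_recr n.+1) /= opprK addrA addNr add0r.
  by congr (h _); lia.
Qed.

Lemma eq_on_downset (T : Type) (P : pred int) (f : int -> T) :
  (forall a b, a <= b -> P b -> P a) -> (forall k, P k -> f k = f (k - 1)) ->
  forall i i', P i -> P i' -> f i = f i'.
Proof.
move=> Pdown f_pred.
have f_shift i (d : nat) i' : P i' -> i' - i = d%:Z -> f i = f i'.
  elim: d i' => [|d IHd] i' Pi' e; first by have -> : i' = i by lia.
  rewrite (f_pred i') //; apply: IHd; last by lia.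
  by apply: (Pdown _ i') => //; lia.
move=> i i' Pi Pi'; have [ii'|i'i] := lerP i i'.
  by apply: (f_shift i `|i' - i|%N) => //; lia.
by symmetry; apply: (f_shift i' `|i - i'|%N) => //; lia.
Qed.

Lemma choice_on (P : pred int) (A : int -> Type) (Q : forall i, A i -> Prop) :
  (forall i, A i) -> (forall i, P i -> exists x, Q i x) ->
  exists f : forall i, A i, forall i, P i -> Q i (f i).
Proof.
move=> dflt ex_Q.
have ex_Q' i : exists x : A i, P i -> Q i x.
  by case: (boolP (P i)) => [/ex_Q [x Qx]|_]; [exists x | exists (dflt i)].
exists (fun i => proj1_sig (constructive_indefinite_description _ (ex_Q' i))).
by move=> i; case: constructive_indefinite_description => x /= /[apply].
Qed.

Section ConditionallyConvergentSystem.
Variables (R : pzRingType) (I : Type) (le : I -> I -> bool) (S : system R I).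
Variables (fin : int -> I) (ninf : I).
Hypothesis sysS : is_system le S.
Hypothesis convS : cond_conv S fin ninf.
Hypothesis le_ninf : forall x, le ninf x.
Hypothesis le_finE : forall a b : int, le (fin a) (fin b) = (a <= b).
Hypothesis le_transI : forall x y z, le x y -> le y z -> le x z.
Variable j : I.
Hypothesis le_jj : le j j.
Variable i0 : int.
Hypothesis below_i0 : le (fin i0) j.

Local Notation below i := (le (fin i) j).
Local Notation alpha n i := (eta S ninf (fin (i - 1)) ninf (fin i) n).
Local Notation ext n i := (eta S ninf (fin i) ninf j n).
Local Notation res n i := (eta S ninf j (fin i) j n).
Local Notation tr n i := (eta S (fin (i - 1)) j (fin i) j n).
Local Notation bnd n i := (del S ninf (fin i) j n).

Lemma below_le a b : a <= b -> below b -> below a.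
Proof. by move=> ab; apply: le_transI; rewrite le_finE. Qed.

Lemma below_pred i : below i -> below (i - 1).
Proof. by apply: below_le; lia. Qed.

Lemma eta_fin_comp n a b c (x : H S ninf (fin a) n) : a <= b -> b <= c ->
  eta S ninf (fin b) ninf (fin c) n (eta S ninf (fin a) ninf (fin b) n x)
  = eta S ninf (fin a) ninf (fin c) n x.
Proof. by move=> ab bc; case: sysS => _ [comp _]; apply: comp; rewrite ?le_finE. Qed.

Lemma ext_alpha n i a : below i -> ext n i (alpha n i a) = ext n (i - 1) a.
Proof.
move=> Pi; case: sysS => _ [comp _].
by apply: comp; rewrite ?le_finE ?below_pred //; lia.
Qed.

Lemma res_tr n i h : below i -> tr n i (res n (i - 1) h) = res n i h.
Proof.
move=> Pi; case: sysS => _ [comp _].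
by apply: comp; rewrite ?le_finE ?below_pred //; lia.
Qed.

Lemma bnd_tr n i x : below i -> bnd n i (tr n i x) = alpha (n - 1) i (bnd n (i - 1) x).
Proof.
move=> Pi; case: sysS => _ [_ [nat _]].
by apply: nat; rewrite ?le_finE ?below_pred //; lia.
Qed.

Lemma res_eq0P n i h : below i -> res n i h = 0 <-> exists a, ext n i a = h.
Proof. by move=> Pi; case: sysS => _ [_ [_ /(_ ninf (fin i) j n (le_ninf _) Pi) []]]. Qed.

Lemma bnd_eq0P n i x : below i -> bnd n i x = 0 <-> exists h, res n i h = x.
Proof. by move=> Pi; case: sysS => _ [_ [_ /(_ ninf (fin i) j n (le_ninf _) Pi) [_ []]]]. Qed.

Lemma ext_eq0P n i a : below i -> ext (n - 1) i a = 0 <-> exists y, bnd n i y = a.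
Proof. by move=> Pi; case: sysS => _ [_ [_ /(_ ninf (fin i) j n (le_ninf _) Pi) [_ []]]]. Qed.

Lemma res_ext n i a : below i -> res n i (ext n i a) = 0.
Proof. by move=> Pi; apply/res_eq0P => //; exists a. Qed.

Lemma ext_bnd n i y : below i -> ext (n - 1) i (bnd n i y) = 0.
Proof. by move=> Pi; apply/ext_eq0P => //; exists y. Qed.

(* A compatible family below [j] extends by [eta] to one on all of Z. *)
Lemma lim_below_eq0 n (c : forall i, H S ninf (fin i) n) :
  (forall i, below i -> alpha n i (c (i - 1)) = c i) ->
  forall i, below i -> c i = 0.
Proof.
move=> c_compat i Pi.
pose c' s := if s <= i then c s else eta S ninf (fin i) ninf (fin s) n (c i).
suff /(_ i) : forall s, c' s = 0 by rewrite /c' lexx.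
apply: convS.1 => s; rewrite /c'.
have [s_le_i|i_lt_s] := lerP s i.
  by rewrite ifT ?c_compat //; [apply: below_le Pi | lia].
case: ifP => s1i; last by rewrite eta_fin_comp //; lia.
by have -> : s - 1 = i by lia.
Qed.

Definition del_lift n (y : forall i, H S (fin i) j n)
    (a : forall i, H S ninf (fin i) (n - 1)) :=
  forall i, below i -> a i - alpha (n - 1) i (a (i - 1)) = bnd n i (y i).
Arguments del_lift : clear implicits.

Lemma del_lift_exists n y : exists a, del_lift n y a.
Proof.
have [a ha] := convS.2 (n - 1) (fun i => if below i then bnd n i (y i) else 0).
by exists a => i Pi; rewrite ha Pi.
Qed.

Definition lift n y := epsilon (inhabits (fun i => 0)) (del_lift n y).
Arguments lift : clear implicits.

Lemma liftP n y : del_lift n y (lift n y).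
Proof. exact: epsilon_spec (del_lift_exists y). Qed.

Lemma del_lift_unique n y a a' : del_lift n y a -> del_lift n y a' ->
  forall i, below i -> a i = a' i.
Proof.
move=> ha ha' i Pi; apply: subr0_eq.
apply: (lim_below_eq0 (c := fun k => a k - a' k)) Pi => k Pk /=.
by rewrite linearB; apply/esym/subr_eq_swap; rewrite ha // ha'.
Qed.

Lemma ext_del_lift_const n y a : del_lift n y a ->
  forall i i', below i -> below i' -> ext (n - 1) i (a i) = ext (n - 1) i' (a i').
Proof.
move=> ha; apply: (eq_on_downset (P := fun i => below i)) => [|k Pk].
  exact: below_le.
by apply: subr0_eq; rewrite -(ext_alpha _ Pk) -linearB ha // ext_bnd.
Qed.

Definition delta n y := ext (n - 1) i0 (lift n y i0).
Arguments delta : clear implicits.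

Lemma delta_del_lift n y a : del_lift n y a ->
  forall i, below i -> delta n y = ext (n - 1) i (a i).
Proof.
move=> ha i Pi; rewrite /delta (del_lift_unique (liftP y) ha below_i0).
exact: ext_del_lift_const ha _ _ below_i0 Pi.
Qed.

Lemma deltaD n y y' : delta n (fun i => y i + y' i) = delta n y + delta n y'.
Proof.
have ha : del_lift n (fun i => y i + y' i) (fun i => lift n y i + lift n y' i).
  by move=> i Pi; rewrite !linearD -!liftP // addrACA.
by rewrite (delta_del_lift ha below_i0) linearD.
Qed.

Lemma deltaZ n r y : delta n (fun i => r *: y i) = r *: delta n y.
Proof.
have ha : del_lift n (fun i => r *: y i) (fun i => r *: lift n y i).
  by move=> i Pi; rewrite !linearZZ -scalerDr liftP.
by rewrite (delta_del_lift ha below_i0) linearZZ.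
Qed.

Lemma res_family_coboundary n (z : forall i, H S (fin i) j n) :
  (forall i, below i -> exists h, res n i h = z i) ->
  exists x, forall i, below i -> z i = x i - tr n i (x (i - 1)).
Proof.
move=> /(choice_on (fun=> 0)) [h hh].
have [w hw] := exists_antidifference h.
exists (fun i => res n i (w i)) => i Pi.
by rewrite res_tr // -linearB hw hh.
Qed.

Lemma delta_eq0P n y : delta n y = 0 <->
  exists x, forall i, below i -> y i = x i - tr n i (x (i - 1)).
Proof.
split=> [delta0|[x hx]]; last first.
  have ha : del_lift n y (fun i => bnd n i (x i)).
    by move=> i Pi; rewrite -bnd_tr // -linearB hx.
  by rewrite (delta_del_lift ha below_i0) ext_bnd.
have /(choice_on (fun=> 0)) [x hx] :
    forall i, below i -> exists x, bnd n i x = lift n y i.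
  by move=> i Pi; apply/ext_eq0P; rewrite -?(delta_del_lift (liftP y) Pi).
have [r hr] : exists r, forall i, below i ->
    y i - (x i - tr n i (x (i - 1))) = r i - tr n i (r (i - 1)).
  apply: res_family_coboundary => i Pi; apply/bnd_eq0P => //.
  by rewrite !(linearB (bnd n i)) bnd_tr // !hx ?below_pred // liftP // subrr.
exists (fun i => x i + r i) => i Pi.
by rewrite linearD opprD addrACA -hr // addrC subrK.
Qed.

Lemma ker_res_eq_im_delta n h :
  (forall i, below i -> res (n - 1) i h = 0) <-> exists y, delta n y = h.
Proof.
split=> [res0|[y <-] i Pi]; last first.
  by rewrite (delta_del_lift (liftP y) Pi) res_ext.
have /(choice_on (fun=> 0)) [a ha] :
    forall i, below i -> exists a, ext (n - 1) i a = h.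
  by move=> i Pi; apply/res_eq0P; rewrite ?res0.
have /(choice_on (fun=> 0)) [y hy] : forall i, below i ->
    exists y, bnd n i y = a i - alpha (n - 1) i (a (i - 1)).
  move=> i Pi; apply/ext_eq0P => //.
  by rewrite linearB ext_alpha // !ha ?below_pred // subrr.
exists y; rewrite (delta_del_lift (a := a) _ below_i0) ?ha // => i Pi.
by rewrite hy.
Qed.

Lemma lim_family_lift m (x : forall i, H S (fin i) j m) :
  (forall i, below i -> tr m i (x (i - 1)) = x i) ->
  exists h, forall i, below i -> res m i h = x i.
Proof.
move=> x_compat.
have bnd_x0 : forall i, below i -> bnd m i (x i) = 0.
  by apply: lim_below_eq0 => i Pi; rewrite -bnd_tr // x_compat.
have /(choice_on (fun=> 0)) [g hg] : forall i, below i -> exists g, res m i g = x i.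
  by move=> i Pi; apply/bnd_eq0P; rewrite ?bnd_x0.
have /(choice_on (fun=> 0)) [e' he'] :
    forall i, below i -> exists e, ext m i e = g i - g (i - 1).
  move=> i Pi; apply/res_eq0P => //.
  by rewrite linearB hg // -(res_tr _ Pi) hg ?below_pred // x_compat // subrr.
have [e he] := convS.2 m e'.
pose f k := g k - ext m k (e k).
exists (f i0) => i Pi.
have -> : f i0 = f i.
  apply: (eq_on_downset (P := fun k => below k)) below_i0 Pi => [|k Pk].
    exact: below_le.
  by apply: subr_eq_swap; rewrite -he' // -he linearB ext_alpha.
by rewrite /f linearB hg // res_ext // subr0.
Qed.

Lemma ses_at_of_cond_conv : ses_at le S fin ninf j.
Proof.
exists delta; split; first exact: deltaD.
split; first exact: deltaZ.
split; first exact: delta_del_lift.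
split; first exact: delta_eq0P.
split; first exact: ker_res_eq_im_delta.
exact: lim_family_lift.
Qed.

End ConditionallyConvergentSystem.

Lemma lle_refl x : lle x x.
Proof. by case: x => //= x; apply: lexx. Qed.

Lemma lle_trans x y z : lle x y -> lle y z -> lle x z.
Proof. by case: x => [|x]; case: y => [|y]; case: z => [|z] //=; apply: le_trans. Qed.

Lemma xle_refl x : xle x x.
Proof. by case: x => //= x; apply: lexx. Qed.

Lemma xle_trans x y z : xle x y -> xle y z -> xle x z.
Proof. by case: x => [|x|]; case: y => [|y|]; case: z => [|z|] //=; apply: le_trans. Qed.

Theorem proposition7p3 :
  (forall (R : pzRingType) (S : system R lidx),
      is_system lle S -> cond_conv S LFin LNInf ->
      forall j : int, ses_at lle S LFin LNInf (LFin j)) /\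
  (forall (R : pzRingType) (S : system R xidx),
      is_system xle S -> cond_conv S XFin XNInf ->
      forall j : xidx, j <> XNInf -> ses_at xle S XFin XNInf j).
Proof.
split=> [R S sysS convS j | R S sysS convS [//|j|] _].
- by apply: (ses_at_of_cond_conv sysS convS _ _ lle_trans (lle_refl _) (lle_refl (LFin j))).
- by apply: (ses_at_of_cond_conv sysS convS _ _ xle_trans (xle_refl _) (xle_refl (XFin j))).
- by apply: (ses_at_of_cond_conv sysS convS _ _ xle_trans (xle_refl _) (isT : xle (XFin 0) XPInf)).
Qed.
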